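(* If there exist a CMDRR$(n,k)$, a SAMDRR$(m)$, and two mutually orthogonal latin squares of order $n$, then there exists a CMDRR$(mn, mk)$.
   Context: A mixed doubles game is a match between two teams, each team consisting of one man and one woman; in a game $M_a F_b$ v $M_c F_d$, $M_a$ and $F_b$ are partners, $M_c$ and $F_d$ are partners, and each player of one team opposes each player of the other team. A complete mixed doubles round robin tournament CMDRR$(n,k)$ is a schedule (set) of mixed doubles games for $n$ men and $n$ women, of which $k$ men and $k$ women are paired into $k$ spouse pairs (a spouse pair is one man and one woman), such that: spouses never play in a game together as partners or opponents; every man and woman who are not spouses are partners exactly once and opponents exactly once; each player who has a spouse opposes every other player of the same sex exactly once; each player who does not have a spouse opposes some other same-sex player who does not have a spouse exactly twice and opposes all other same-sex players exactly once. A spouse-avoiding mixed doubles round robin tournament SAMDRR$(m)$ is a schedule of mixed doubles games for $m$ husband-and-wife couples in which spouses never play in a game together as partners or opponents, every man and woman who are not spouses are partners exactly once and opponents exactly once, and every pair of players of the same sex are opponents exactly once (i.e. a CMDRR$(m,m)$). *)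

From mathcomp Require Import all_boot.
Set Implicit Arguments. Unset Strict Implicit. Unset Printing Implicit Defensive.

(* A mixed doubles game  M_a F_b  v  M_c F_d  among n men and n women,
   both indexed by 'I_n. *)
Record mdgame (n : nat) := MDGame {
  gm1 : 'I_n;
  gw1 : 'I_n;
  gm2 : 'I_n;
  gw2 : 'I_n
}.

Definition spouse (n k : nat) (i j : 'I_n) : bool := (i == j) && (i < k).

Definition partners n (g : mdgame n) (i j : 'I_n) : bool :=
  ((gm1 g == i) && (gw1 g == j)) || ((gm2 g == i) && (gw2 g == j)).

Definition opp_mw n (g : mdgame n) (i j : 'I_n) : bool :=
  ((gm1 g == i) && (gw2 g == j)) || ((gm2 g == i) && (gw1 g == j)).

Definition opp_mm n (g : mdgame n) (i i' : 'I_n) : bool :=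
  ((gm1 g == i) && (gm2 g == i')) || ((gm2 g == i) && (gm1 g == i')).

Definition opp_ww n (g : mdgame n) (j j' : 'I_n) : bool :=
  ((gw1 g == j) && (gw2 g == j')) || ((gw2 g == j) && (gw1 g == j')).

Definition game_ok n k (g : mdgame n) : bool :=
  [&& gm1 g != gm2 g, gw1 g != gw2 g,
      ~~ spouse k (gm1 g) (gw1 g), ~~ spouse k (gm2 g) (gw2 g),
      ~~ spouse k (gm1 g) (gw2 g) & ~~ spouse k (gm2 g) (gw1 g)].

Definition is_CMDRR (n k : nat) (S : seq (mdgame n)) : Prop :=
  [/\ k <= n, all (game_ok k) S &
   [/\ (forall i j : 'I_n, ~~ spouse k i j ->
          count (fun g => partners g i j) S = 1 /\
          count (fun g => opp_mw g i j) S = 1),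
      (forall i i' : 'I_n, i < k -> i' != i ->
          count (fun g => opp_mm g i i') S = 1),
      (forall j j' : 'I_n, j < k -> j' != j ->
          count (fun g => opp_ww g j j') S = 1),
      (forall i : 'I_n, k <= i -> exists i' : 'I_n,
          [/\ k <= i', i' != i, count (fun g => opp_mm g i i') S = 2 &
              forall i'' : 'I_n, i'' != i -> i'' != i' ->
                count (fun g => opp_mm g i i'') S = 1])
    & (forall j : 'I_n, k <= j -> exists j' : 'I_n,
          [/\ k <= j', j' != j, count (fun g => opp_ww g j j') S = 2 &
              forall j'' : 'I_n, j'' != j -> j'' != j' ->
                count (fun g => opp_ww g j j'') S = 1])]].

Definition CMDRR_exists (n k : nat) : Prop := exists S : seq (mdgame n), @is_CMDRR n k S.

Definition SAMDRR_exists (m : nat) : Prop := CMDRR_exists m m.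

Definition latin_square n (L : 'I_n -> 'I_n -> 'I_n) : Prop :=
  (forall r, injective (L r)) /\ (forall c, injective (fun r => L r c)).

Definition orthogonal_ls n (L1 L2 : 'I_n -> 'I_n -> 'I_n) : Prop :=
  forall r c r' c', L1 r c = L1 r' c' -> L2 r c = L2 r' c' -> r = r' /\ c = c'.

Definition MOLS_pair_exists (n : nat) : Prop :=
  exists L1 L2 : 'I_n -> 'I_n -> 'I_n,
    [/\ latin_square L1, latin_square L2 & orthogonal_ls L1 L2].

From mathcomp Require Import all_boot zify.
Set Implicit Arguments. Unset Strict Implicit. Unset Printing Implicit Defensive.

(* Let S be the CMDRR(n, k), T the SAMDRR(m) and L1, L2 the orthogonal latin
   squares; player (u, x) of the new tournament is the copy in group u < m of
   player x < n. For every game M_a F_b v M_c F_d of T and every cell (r, c)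
   we play M_(a,r) F_(b,c) v M_(c, L1 r c) F_(d, L2 r c), and inside every
   group we play a copy of S. Rows, columns, L1 and L2 form an orthogonal
   array (any two of them determine the cell), so two players of different
   groups u, v meet in a given way exactly as often as u and v do in T, that
   is once; two players of the same group meet only in the copy of S. *)

Lemma all_allpairs (S T R : Type) (P : pred R) (f : S -> T -> R)
    (QS : pred S) (QT : pred T) (s : seq S) (t : seq T) :
  all QS s -> all QT t -> (forall x y, QS x -> QT y -> P (f x y)) ->
  all P [seq f x y | x <- s, y <- t].
Proof.
move=> + QTt fP; elim: s => //= x s IHs /andP[QSx /IHs].
rewrite all_cat all_map => ->; rewrite andbT.
by apply: sub_all QTt => y; apply: fP.
Qed.

Lemma sumn_map_mul (T : Type) (P : pred T) (c : nat) (s : seq T) :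
  sumn [seq P x * c | x <- s] = count P s * c.
Proof. by elim: s => //= x s ->; rewrite mulnDl. Qed.

Lemma count_enum_eq2 (T : finType) (u v : T) :
  count (fun a => (a == u) && (a == v)) (enum T) = (u == v).
Proof.
case: eqVneq => [<- | neq_uv].
  under eq_count do rewrite andbb.
  by rewrite (count_uniq_mem _ (enum_uniq _)) mem_enum.
rewrite (@eq_count _ _ pred0) ?count_pred0 // => a /=.
by case: eqVneq => // ->; rewrite (negbTE neq_uv).
Qed.

Lemma count_enum_inj (T : finType) (rT : eqType) (F : T -> rT) (z : T) :
  injective F -> count (fun p => F p == F z) (enum T) = 1.
Proof.
move=> F_inj; rewrite (@eq_count _ _ (pred1 z)) => [|p].
  by rewrite (count_uniq_mem _ (enum_uniq _)) mem_enum.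
by rewrite /= (inj_eq F_inj).
Qed.

Lemma eq_count_all (T : Type) (Q a1 a2 : pred T) (s : seq T) :
  all Q s -> (forall x, Q x -> a1 x = a2 x) -> count a1 s = count a2 s.
Proof. by move=> + eq_a; elim: s => //= x s IHs /andP[/eq_a-> /IHs->]. Qed.

Lemma count_orb_guarded (T : Type) (b1 b2 : bool) (A B : pred T) (s : seq T) :
  ~~ (b1 && b2) -> count A s = 1 -> count B s = 1 ->
  count (fun x => b1 && A x || b2 && B x) s = b1 || b2.
Proof.
case: b1; case: b2 => //= _ cA cB; last exact: count_pred0.
by rewrite -cA; apply: eq_count => x; rewrite orbF.
Qed.

Lemma count_andl (T : Type) (b : bool) (A : pred T) (s : seq T) :
  count (fun x => b && A x) s = b * count A s.
Proof. by case: b; rewrite ?mul1n // mul0n count_pred0. Qed.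

Lemma swap_pair_inj (T1 T2 T3 : Type) (f : T1 -> T2) (g : T1 -> T3) :
  injective (fun p => (f p, g p)) -> injective (fun p => (g p, f p)).
Proof. by move=> fg_inj p q [eg ef]; apply: fg_inj; rewrite ef eg. Qed.

Section ProdOrd.
Variables m n : nat.

Lemma prod_ord_subproof (u : 'I_m) (x : 'I_n) : x * m + u < m * n.
Proof. have := ltn_ord u; have := ltn_ord x; nia. Qed.

(* Player (u, x) is numbered [x * m + u], so that the first [m * k] players
   are exactly the married ones, those with [x < k]. *)
Definition prod_ord (u : 'I_m) (x : 'I_n) : 'I_(m * n) :=
  Ordinal (prod_ord_subproof u x).

Lemma prod_ord_eq (u v : 'I_m) (x y : 'I_n) :
  (prod_ord u x == prod_ord v y) = (u == v) && (x == y).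
Proof.
apply/eqP/andP => [/(congr1 val) /= E | [/eqP -> /eqP ->] //].
have m_gt0 : 0 < m by apply: leq_ltn_trans (ltn_ord u).
have Eu : u = v :> nat.
  by have := congr1 (modn^~ m) E; rewrite !modnMDl !modn_small.
have Ex : x = y :> nat.
  by have := congr1 (divn^~ m) E; rewrite !divnMDl // !divn_small ?addn0.
by split; apply/eqP/val_inj.
Qed.

Lemma prod_ord_ltn k (u : 'I_m) (x : 'I_n) : (prod_ord u x < m * k) = (x < k).
Proof. have := ltn_ord u; rewrite /=; case: ltnP; nia. Qed.

Variant prod_ord_spec : 'I_(m * n) -> Type :=
  ProdOrdSpec u x : prod_ord_spec (prod_ord u x).

Lemma prod_ordP i : prod_ord_spec i.
Proof.
have m_gt0 : 0 < m by case: m i => [[]|].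
have lt_mod : i %% m < m by rewrite ltn_pmod.
have lt_div : i %/ m < n by rewrite ltn_divLR // [n * m]mulnC.
have -> : i = prod_ord (Ordinal lt_mod) (Ordinal lt_div).
  by apply: val_inj; rewrite /= -divn_eq.
by constructor.
Qed.

Lemma spouse_prod_ord k (u v : 'I_m) (x y : 'I_n) :
  spouse (m * k) (prod_ord u x) (prod_ord v y) = (u == v) && spouse k x y.
Proof. by rewrite /spouse prod_ord_eq prod_ord_ltn andbA. Qed.

End ProdOrd.

Inductive seat := Man1 | Woman1 | Man2 | Woman2.

Definition seat_of N (g : mdgame N) (s : seat) : 'I_N :=
  match s with Man1 => gm1 g | Woman1 => gw1 g | Man2 => gm2 g | Woman2 => gw2 g end.

(* [partners], [opp_mw], [opp_mm] and [opp_ww] are convertible to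
   [seat_rel Man1 Woman1 Man2 Woman2], [seat_rel Man1 Woman2 Man2 Woman1],
   [seat_rel Man1 Man2 Man2 Man1] and [seat_rel Woman1 Woman2 Woman2 Woman1]. *)
Definition seat_rel N (s t s' t' : seat) (g : mdgame N) (i j : 'I_N) : bool :=
  ((seat_of g s == i) && (seat_of g t == j))
  || ((seat_of g s' == i) && (seat_of g t' == j)).

Definition meets_once_unless_spouses N k (R : mdgame N -> 'I_N -> 'I_N -> bool)
    (S : seq (mdgame N)) : Prop :=
  forall i j : 'I_N, ~~ spouse k i j -> count (fun g => R g i j) S = 1.

Definition married_meet_all_once N k (R : mdgame N -> 'I_N -> 'I_N -> bool)
    (S : seq (mdgame N)) : Prop :=
  forall i i' : 'I_N, i < k -> i' != i -> count (fun g => R g i i') S = 1.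

Definition unmarried_meet_one_twice N k (R : mdgame N -> 'I_N -> 'I_N -> bool)
    (S : seq (mdgame N)) : Prop :=
  forall i : 'I_N, k <= i -> exists i' : 'I_N,
    [/\ k <= i', i' != i, count (fun g => R g i i') S = 2 &
        forall i'' : 'I_N, i'' != i -> i'' != i' -> count (fun g => R g i i'') S = 1].

Lemma game_ok_distinct m (g : mdgame m) : game_ok m g ->
  [/\ gm1 g != gm2 g, gw1 g != gw2 g, gm1 g != gw1 g, gm2 g != gw2 g
    & (gm1 g != gw2 g) /\ (gm2 g != gw1 g)].
Proof.
by rewrite /game_ok /spouse !ltn_ord !andbT => /and5P[? ? ? ? /andP[? ?]].
Qed.

Lemma game_ok_seat_inj m (g : mdgame m) s t :
  game_ok m g -> s <> t -> seat_of g s != seat_of g t.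
Proof.
case/game_ok_distinct => d12 d12' dMW1 dMW2 [dMW12 dMW21].
by case: s; case: t => //= _; rewrite // eq_sym.
Qed.

Section ProductTournament.
Variables m n : nat.
Variables L1 L2 : 'I_n -> 'I_n -> 'I_n.
Hypotheses (L1_latin : latin_square L1) (L2_latin : latin_square L2).
Hypothesis L12_orth : orthogonal_ls L1 L2.

Definition cell_coord (p : 'I_n * 'I_n) (s : seat) : 'I_n :=
  match s with
  | Man1 => p.1 | Woman1 => p.2 | Man2 => L1 p.1 p.2 | Woman2 => L2 p.1 p.2
  end.

Lemma cell_coord_inj s t :
  s <> t -> injective (fun p => (cell_coord p s, cell_coord p t)).
Proof.
have [[L1r L1c] [L2r L2c]] := (L1_latin, L2_latin).
have rowL (L : 'I_n -> 'I_n -> 'I_n) : (forall r, injective (L r)) ->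
    injective (fun p : 'I_n * 'I_n => (p.1, L p.1 p.2)).
  by move=> Lr [r c] [r' c'] /= [<-] /Lr ->.
have colL (L : 'I_n -> 'I_n -> 'I_n) : (forall c, injective (L^~ c)) ->
    injective (fun p : 'I_n * 'I_n => (p.2, L p.1 p.2)).
  by move=> Lc [r c] [r' c'] /= [<-] /Lc ->.
have orth : injective (fun p : 'I_n * 'I_n => (L1 p.1 p.2, L2 p.1 p.2)).
  by move=> [r c] [r' c'] [e1 e2]; have [-> ->] := L12_orth e1 e2.
have pair_id : injective (fun p : 'I_n * 'I_n => (p.1, p.2)).
  by case=> ? ? [? ?] [-> ->].
case: s; case: t => //= st; try by case: st.
all: first [ by [apply: rowL | apply: colL | apply: orth | apply: pair_id]
           | apply: swap_pair_inj;
             by [apply: rowL | apply: colL | apply: orth | apply: pair_id] ].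
Qed.

Lemma count_cell_coord s t x y : s <> t ->
  count (fun p => (cell_coord p s == x) && (cell_coord p t == y))
        (enum {: 'I_n * 'I_n}) = 1.
Proof.
move=> st; have [q _ Fq] := injF_bij (cell_coord_inj st).
rewrite -(count_enum_inj (q (x, y)) (cell_coord_inj st)) Fq.
by apply: eq_count => p; rewrite xpair_eqE.
Qed.

Definition product_game (g : mdgame m) (p : 'I_n * 'I_n) : mdgame (m * n) :=
  MDGame (prod_ord (gm1 g) p.1) (prod_ord (gw1 g) p.2)
         (prod_ord (gm2 g) (L1 p.1 p.2)) (prod_ord (gw2 g) (L2 p.1 p.2)).

Definition group_game (a : 'I_m) (g : mdgame n) : mdgame (m * n) :=
  MDGame (prod_ord a (gm1 g)) (prod_ord a (gw1 g))
         (prod_ord a (gm2 g)) (prod_ord a (gw2 g)).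

Lemma seat_product_game g p s :
  seat_of (product_game g p) s = prod_ord (seat_of g s) (cell_coord p s).
Proof. by case: s. Qed.

Lemma seat_group_game a g s : seat_of (group_game a g) s = prod_ord a (seat_of g s).
Proof. by case: s. Qed.

Definition product_tournament (S : seq (mdgame n)) (T : seq (mdgame m)) :=
  [seq product_game g p | g <- T, p <- enum {: 'I_n * 'I_n}]
  ++ [seq group_game a g | a <- enum 'I_m, g <- S].

Lemma product_tournament_ok k S T : all (game_ok k) S -> all (game_ok m) T ->
  all (game_ok (m * k)) (product_tournament S T).
Proof.
move=> okS okT; rewrite all_cat; apply/andP; split.
  apply: (all_allpairs okT (all_predT _)) => g p /game_ok_distinct.
  case=> d12 d12' dMW1 dMW2 [dMW12 dMW21] _.
  by rewrite /game_ok /= !spouse_prod_ord !prod_ord_eq (negbTE d12) (negbTE d12')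
    (negbTE dMW1) (negbTE dMW2) (negbTE dMW12) (negbTE dMW21).
apply: (all_allpairs (all_predT _) okS) => a g _.
by rewrite /game_ok /= !spouse_prod_ord !prod_ord_eq !eqxx.
Qed.

Section SeatRelation.
Variables s t s' t' : seat.
Hypotheses (neq_st : s <> t) (neq_st' : s' <> t') (neq_ss' : s <> s').
Notation R := (@seat_rel _ s t s' t').

Lemma seat_rel_irrefl (g : mdgame m) u : game_ok m g -> R g u u = false.
Proof.
move=> okg; have ds := game_ok_seat_inj okg neq_st.
have ds' := game_ok_seat_inj okg neq_st'.
apply/negP => /orP[] /andP[/eqP es /eqP et]; [move: ds | move: ds'];
  by rewrite es et eqxx.
Qed.

Lemma count_product_game g u v x y : game_ok m g ->
  count (fun p => R (product_game g p) (prod_ord u x) (prod_ord v y))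
        (enum {: 'I_n * 'I_n}) = R g u v.
Proof.
move=> okg; rewrite /seat_rel.
under eq_count do rewrite !seat_product_game !prod_ord_eq
  (andbACA (seat_of g s == u)) (andbACA (seat_of g s' == u)).
apply: count_orb_guarded; rewrite ?count_cell_coord //.
apply/negP => /andP[/andP[/eqP es _] /andP[/eqP es' _]].
by move: (game_ok_seat_inj okg neq_ss'); rewrite es es' eqxx.
Qed.

Lemma seat_rel_group_game a g u v x y :
  R (group_game a g) (prod_ord u x) (prod_ord v y)
  = (a == u) && (a == v) && R g x y.
Proof.
rewrite /seat_rel !seat_group_game !prod_ord_eq.
by case: (a == u); case: (a == v); rewrite //= !andbF.
Qed.

Lemma count_product_games T u v x y : all (game_ok m) T ->
  count (fun g => R g (prod_ord u x) (prod_ord v y))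
        [seq product_game g p | g <- T, p <- enum {: 'I_n * 'I_n}]
  = count (fun g => R g u v) T.
Proof.
elim: T => //= g T IHT /andP[okg /IHT IH].
by rewrite count_cat count_map count_product_game // IH.
Qed.

Lemma count_group_games S u v x y :
  count (fun g => R g (prod_ord u x) (prod_ord v y))
        [seq group_game a g | a <- enum 'I_m, g <- S]
  = (u == v) * count (fun g => R g x y) S.
Proof.
rewrite count_flatten -map_comp.
under eq_map do rewrite /= count_map
  (eq_count (fun g => seat_rel_group_game _ g u v x y)) count_andl.
by rewrite sumn_map_mul count_enum_eq2.
Qed.

Lemma count_product_tournament S T u v x y : all (game_ok m) T ->
  count (fun g => R g (prod_ord u x) (prod_ord v y)) (product_tournament S T)
  = if u == v then count (fun g => R g x y) S else count (fun g => R g u v) T.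
Proof.
move=> okT; rewrite count_cat count_product_games // count_group_games.
case: eqVneq => [<- | _]; last by rewrite mul0n addn0.
rewrite (eq_count_all okT (a2 := pred0)) => [|g /seat_rel_irrefl-> //].
by rewrite count_pred0 add0n mul1n.
Qed.

Variables (k : nat) (S : seq (mdgame n)) (T : seq (mdgame m)).
Hypothesis okT : all (game_ok m) T.

Lemma product_meets_once_unless_spouses :
  meets_once_unless_spouses k R S -> meets_once_unless_spouses m R T ->
  meets_once_unless_spouses (m * k) R (product_tournament S T).
Proof.
move=> RS RT i j; case: (prod_ordP i) => u x; case: (prod_ordP j) => v y.
rewrite spouse_prod_ord count_product_tournament //.
case: (eqVneq u v) => [_ | neq_uv] /= nsp; first exact: RS.
by apply: RT; rewrite /spouse (negbTE neq_uv).
Qed.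

Lemma product_married_meet_all_once :
  married_meet_all_once k R S -> married_meet_all_once m R T ->
  married_meet_all_once (m * k) R (product_tournament S T).
Proof.
move=> RS RT i i'; case: (prod_ordP i) => u x; case: (prod_ordP i') => v y.
rewrite prod_ord_ltn prod_ord_eq count_product_tournament // => x_lt_k.
case: (eqVneq u v) => [_ | neq_uv] /=; first exact: RS.
by move=> _; apply: RT; rewrite // eq_sym.
Qed.

Lemma product_unmarried_meet_one_twice :
  unmarried_meet_one_twice k R S -> married_meet_all_once m R T ->
  unmarried_meet_one_twice (m * k) R (product_tournament S T).
Proof.
move=> RS RT i; case: (prod_ordP i) => u x; rewrite leqNgt prod_ord_ltn -leqNgt.
move=> /RS[x' [k_le_x' neq_x'x twice once]].
exists (prod_ord u x'); split.
- by rewrite leqNgt prod_ord_ltn -leqNgt.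
- by rewrite prod_ord_eq eqxx.
- by rewrite count_product_tournament // eqxx.
move=> i''; case: (prod_ordP i'') => v y.
rewrite !prod_ord_eq count_product_tournament //.
case: (eqVneq u v) => [_ | neq_uv] /=; first exact: once.
by move=> _ _; apply: RT; rewrite // eq_sym.
Qed.

End SeatRelation.

End ProductTournament.

Theorem theorem9 (n k m : nat) :
  CMDRR_exists n k -> SAMDRR_exists m -> MOLS_pair_exists n ->
  CMDRR_exists (m * n) (m * k).
Proof.
move=> [S [k_le_n okS [once_S mm_S ww_S um_S uw_S]]].
move=> [T [_ okT [once_T mm_T ww_T _ _]]] [L1 [L2 [L1_latin L2_latin L12_orth]]].
have [partners_S mw_S] : meets_once_unless_spouses k (@partners n) S
                         /\ meets_once_unless_spouses k (@opp_mw n) S.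
  by split=> i j /once_S[].
have [partners_T mw_T] : meets_once_unless_spouses m (@partners m) T
                         /\ meets_once_unless_spouses m (@opp_mw m) T.
  by split=> i j /once_T[].
have once := @product_meets_once_unless_spouses m n L1 L2
  L1_latin L2_latin L12_orth.
have married := @product_married_meet_all_once m n L1 L2
  L1_latin L2_latin L12_orth.
have unmarried := @product_unmarried_meet_one_twice m n L1 L2
  L1_latin L2_latin L12_orth.
exists (product_tournament L1 L2 S T); split.
- by rewrite leq_mul2l k_le_n orbT.
- exact: product_tournament_ok.
split.
- move=> i j nsp; split.
  + exact: (once Man1 Woman1 Man2 Woman2 _ _ _ _ _ _ okT partners_S partners_T i j nsp).
  + exact: (once Man1 Woman2 Man2 Woman1 _ _ _ _ _ _ okT mw_S mw_T i j nsp).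
- exact: (married Man1 Man2 Man2 Man1 _ _ _ _ _ _ okT mm_S mm_T).
- exact: (married Woman1 Woman2 Woman2 Woman1 _ _ _ _ _ _ okT ww_S ww_T).
- exact: (unmarried Man1 Man2 Man2 Man1 _ _ _ _ _ _ okT um_S mm_T).
- exact: (unmarried Woman1 Woman2 Woman2 Woman1 _ _ _ _ _ _ okT uw_S ww_T).
Qed.
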